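(* Let $(E,\langle\cdot,\cdot\rangle,\rho,\circ)$ be a pre-Courant algebroid over $M$ and let $\omega\in\Gamma(\operatorname{Hom}(\wedge^2E,E))$. Define $e_1\,\tilde\circ\,e_2=e_1\circ e_2+\omega(e_1,e_2)$. Then $(E,\langle\cdot,\cdot\rangle,\rho,\tilde\circ)$ is a pre-Courant algebroid if and only if $\omega\in C^2_{\mathcal D}(E,\operatorname{Ker}(\rho))$.
   Context: A Courant vector bundle over a smooth manifold $M$ is a vector bundle $E\to M$ with a fibrewise nondegenerate symmetric bilinear form $\langle\cdot,\cdot\rangle$ and a bundle map $\rho:E\to TM$ such that $\rho\circ\rho^*=0$, where $\rho^*:T^*M\to E^*\cong E$ is the dual of $\rho$ followed by the identification $E^*\cong E$ via $\langle\cdot,\cdot\rangle$. A pre-Courant algebroid structure on it is an $\mathbb R$-bilinear operation $\circ$ on $\Gamma(E)$ such that for all $e_1,e_2,e_3\in\Gamma(E)$: (i) $\rho(e_1\circ e_2)=[\rho(e_1),\rho(e_2)]$; (ii) $\langle e_1\circ e_1,e_2\rangle=\frac12\rho(e_2)\langle e_1,e_1\rangle$; (iii) $\rho(e_1)\langle e_2,e_3\rangle=\langle e_1\circ e_2,e_3\rangle+\langle e_2,e_1\circ e_3\rangle$. Define $\mathcal D:C^\infty(M)\to\Gamma(E)$ by $\langle\mathcal Df,e\rangle=\rho(e)f$. $C^2_{\mathcal D}(E,\operatorname{Ker}(\rho))$ is the space of $C^\infty(M)$-bilinear maps $\phi:\Gamma(E)\times\Gamma(E)\to\Gamma(E)$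 such that (1) $\phi$ takes values in $\Gamma(\operatorname{Ker}\rho)$, (2) $\phi(\mathcal Df,e)=0$ for all $f\in C^\infty(M)$, $e\in\Gamma(E)$, (3) $(e_1,e_2,e_3)\mapsto\langle\phi(e_1,e_2),e_3\rangle$ is totally skew-symmetric. *)

(* Algebraic (section-level) model of a Courant vector bundle:
   A plays C^oo(M) (a commutative R-algebra), S plays Gamma(E) (an A-module),
   vector fields are R-linear derivations of A, the anchor rho is A-linear. *)
From HB Require Import structures.
From mathcomp Require Import all_boot all_order all_algebra.
Set Implicit Arguments. Unset Strict Implicit. Unset Printing Implicit Defensive.
Import Order.TTheory GRing.Theory Num.Theory.
Local Open Scope ring_scope.

Section CourantDefs.
Variables (R : realFieldType) (A : comAlgType R) (S : lmodType A).

Definition is_derivation (X : A -> A) : Prop :=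
  (forall (r : R) (f g : A), X (r *: f + g) = r *: X f + X g) /\
  (forall f g : A, X (f * g) = f * X g + X f * g).

Definition vf_bracket (X Y : A -> A) : A -> A := fun f => X (Y f) - Y (X f).

Definition A_bilinear (phi : S -> S -> S) : Prop :=
  forall (a : A) (e1 e2 e3 : S),
    phi (a *: e1 + e2) e3 = a *: phi e1 e3 + phi e2 e3 /\
    phi e3 (a *: e1 + e2) = a *: phi e3 e1 + phi e3 e2.

Definition R_bilinear (circ : S -> S -> S) : Prop :=
  forall (r : R) (e1 e2 e3 : S),
    circ (r%:A *: e1 + e2) e3 = r%:A *: circ e1 e3 + circ e2 e3 /\
    circ e3 (r%:A *: e1 + e2) = r%:A *: circ e3 e1 + circ e3 e2.

(* Courant vector bundle: pairing, anchor rho, and D : C^oo(M) -> Gamma(E)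
   the map defined by <D f, e> = rho(e) f (uniquely determined by
   nondegeneracy); rho o rho^* = 0 is rho (D f) = 0. *)
Definition courant_vb (pair : S -> S -> A) (rho : S -> A -> A) (D : A -> S) : Prop :=
  (forall e1 e2, pair e1 e2 = pair e2 e1) /\
  (forall (a : A) e1 e2 e3, pair (a *: e1 + e2) e3 = a * pair e1 e3 + pair e2 e3) /\
  (forall e, (forall e', pair e e' = 0) -> e = 0) /\
  (forall (a : A) e1 e2 f, rho (a *: e1 + e2) f = a * rho e1 f + rho e2 f) /\
  (forall e, is_derivation (rho e)) /\
  (forall f e, pair (D f) e = rho e f) /\
  (forall f g, rho (D f) g = 0).

Definition pre_courant (pair : S -> S -> A) (rho : S -> A -> A)
    (circ : S -> S -> S) : Prop :=
  R_bilinear circ /\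
  (forall e1 e2 f, rho (circ e1 e2) f = vf_bracket (rho e1) (rho e2) f) /\
  (forall e1 e2, pair (circ e1 e1) e2 = (2^-1 : R) *: rho e2 (pair e1 e1)) /\
  (forall e1 e2 e3,
     rho e1 (pair e2 e3) = pair (circ e1 e2) e3 + pair e2 (circ e1 e3)).

Definition wedge2_hom (omega : S -> S -> S) : Prop :=
  A_bilinear omega /\ (forall e, omega e e = 0).

Definition C2D (pair : S -> S -> A) (rho : S -> A -> A) (D : A -> S)
    (phi : S -> S -> S) : Prop :=
  A_bilinear phi /\
  (forall e1 e2 f, rho (phi e1 e2) f = 0) /\
  (forall f e, phi (D f) e = 0) /\
  (forall e1 e2 e3,
     pair (phi e1 e2) e3 = - pair (phi e2 e1) e3 /\
     pair (phi e1 e2) e3 = - pair (phi e1 e3) e2 /\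
     pair (phi e1 e2) e3 = - pair (phi e3 e2) e1).

End CourantDefs.

(* The difference between two pre-Courant structures with the same anchor and
   pairing is tensorial, so each axiom for [circ + omega] splits as the axiom
   for [circ] plus a condition on [omega] alone: the anchor axiom gives
   [rho o omega = 0], axiom (ii) is automatic because [omega] is alternating,
   and metric compatibility gives skew-symmetry of [<omega(e1,e2),e3>] in
   [e2, e3]. Together with skew-symmetry in [e1, e2] this is total
   skew-symmetry, and then [<omega(D f, e), e'> = <D f, omega(e, e')> =
   rho(omega(e, e')) f = 0] forces [omega(D f, e) = 0] by nondegeneracy. *)
From HB Require Import structures.
From mathcomp Require Import all_boot all_order all_algebra.
Set Implicit Arguments.
Unset Strict Implicit.
Unset Printing Implicit Defensive.

Import Order.TTheory GRing.Theory Num.Theory.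
Local Open Scope ring_scope.

Section PerturbedPreCourant.
Variables (R : realFieldType) (A : comAlgType R) (S : lmodType A).
Variables (pair : S -> S -> A) (rho : S -> A -> A).

Hypothesis pairC : forall e1 e2, pair e1 e2 = pair e2 e1.
Hypothesis pair_linl :
  forall (a : A) e1 e2 e3, pair (a *: e1 + e2) e3 = a * pair e1 e3 + pair e2 e3.
Hypothesis anchor_lin :
  forall (a : A) e1 e2 f, rho (a *: e1 + e2) f = a * rho e1 f + rho e2 f.

Lemma pairDl e1 e2 e3 : pair (e1 + e2) e3 = pair e1 e3 + pair e2 e3.
Proof. by have := pair_linl 1 e1 e2 e3; rewrite scale1r mul1r. Qed.

Lemma pair0l e : pair 0 e = 0.
Proof. by apply: (addrI (pair 0 e)); rewrite -pairDl !addr0. Qed.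

Lemma pairNl e1 e2 : pair (- e1) e2 = - pair e1 e2.
Proof. by apply: (addrI (pair e1 e2)); rewrite -pairDl !subrr pair0l. Qed.

Lemma anchorD e1 e2 f : rho (e1 + e2) f = rho e1 f + rho e2 f.
Proof. by have := anchor_lin 1 e1 e2 f; rewrite scale1r mul1r. Qed.

Lemma pair_metric_perturb (circ omega : S -> S -> S) e1 e2 e3 :
  pair (circ e1 e2 + omega e1 e2) e3 + pair e2 (circ e1 e3 + omega e1 e3) =
  pair (circ e1 e2) e3 + pair e2 (circ e1 e3) +
  (pair (omega e1 e2) e3 + pair (omega e1 e3) e2).
Proof.
rewrite pairDl [pair e2 _]pairC pairDl (pairC e2 (circ e1 e3)).
by rewrite -!addrA; congr (_ + _); rewrite addrCA.
Qed.

Section Alternating.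
Variable omega : S -> S -> S.
Hypothesis omega_bilin : A_bilinear omega.
Hypothesis omega_alt : forall e, omega e e = 0.

Lemma bilinearDl e1 e2 e : omega (e1 + e2) e = omega e1 e + omega e2 e.
Proof. by have := (omega_bilin 1 e1 e2 e).1; rewrite !scale1r. Qed.

Lemma bilinearDr e1 e2 e : omega e (e1 + e2) = omega e e1 + omega e e2.
Proof. by have := (omega_bilin 1 e1 e2 e).2; rewrite !scale1r. Qed.

Lemma alternating_skew e1 e2 : omega e2 e1 = - omega e1 e2.
Proof.
apply/eqP; rewrite -addr_eq0 addrC.
have := omega_alt (e1 + e2).
by rewrite bilinearDl !bilinearDr !omega_alt add0r addr0 => ->.
Qed.

Lemma perturb_R_bilinear (circ : S -> S -> S) :
  R_bilinear circ -> R_bilinear (fun e1 e2 => circ e1 e2 + omega e1 e2).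
Proof.
move=> circ_bilin r e1 e2 e3.
have [c1 c2] := circ_bilin r e1 e2 e3; have [o1 o2] := omega_bilin r%:A e1 e2 e3.
by split; rewrite ?c1 ?c2 ?o1 ?o2 scalerDr addrACA.
Qed.

Lemma pre_courant_perturbE (circ : S -> S -> S) :
  pre_courant pair rho circ ->
  pre_courant pair rho (fun e1 e2 => circ e1 e2 + omega e1 e2) <->
  (forall e1 e2 f, rho (omega e1 e2) f = 0) /\
  (forall e1 e2 e3, pair (omega e1 e2) e3 = - pair (omega e1 e3) e2).
Proof.
move=> [circ_bilin [circ_anchor [circ_sq circ_metric]]].
have anchor_perturb e1 e2 f :
    rho (circ e1 e2 + omega e1 e2) f =
    vf_bracket (rho e1) (rho e2) f + rho (omega e1 e2) f.
  by rewrite anchorD circ_anchor.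
have metric_perturb e1 e2 e3 :
    pair (circ e1 e2 + omega e1 e2) e3 + pair e2 (circ e1 e3 + omega e1 e3) =
    rho e1 (pair e2 e3) + (pair (omega e1 e2) e3 + pair (omega e1 e3) e2).
  by rewrite pair_metric_perturb circ_metric.
split.
- move=> [_ [anchor_new [_ metric_new]]]; split=> [e1 e2 f | e1 e2 e3].
    apply: (addrI (vf_bracket (rho e1) (rho e2) f)).
    by rewrite addr0 -anchor_perturb anchor_new.
  apply/eqP; rewrite -addr_eq0; apply/eqP.
  apply: (addrI (rho e1 (pair e2 e3))).
  by rewrite addr0 -metric_perturb metric_new.
- move=> [omega_anchor omega_skew23].
  split; first exact: perturb_R_bilinear.
  split; first by move=> e1 e2 f; rewrite anchor_perturb omega_anchor addr0.
  split; first by move=> e1 e2; rewrite omega_alt addr0 circ_sq.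
  by move=> e1 e2 e3; rewrite metric_perturb omega_skew23 addNr addr0.
Qed.

Hypothesis pair_nondeg : forall e, (forall e', pair e e' = 0) -> e = 0.
Variable D : A -> S.
Hypothesis pairD : forall f e, pair (D f) e = rho e f.

Lemma C2DE :
  C2D pair rho D omega <->
  (forall e1 e2 f, rho (omega e1 e2) f = 0) /\
  (forall e1 e2 e3, pair (omega e1 e2) e3 = - pair (omega e1 e3) e2).
Proof.
split=> [[_ [omega_anchor [_ omega_skew]]] | [omega_anchor omega_skew23]].
  by split=> // e1 e2 e3; have [_ []] := omega_skew e1 e2 e3.
have omega_skew12 e1 e2 e3 : pair (omega e1 e2) e3 = - pair (omega e2 e1) e3.
  by rewrite (alternating_skew e1 e2) pairNl opprK.
split=> //; split=> //; split.
  move=> f e; apply: pair_nondeg => e'.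
  by rewrite omega_skew12 omega_skew23 omega_skew12 pairC pairD omega_anchor
    !oppr0.
move=> e1 e2 e3; split=> //; split=> //.
by rewrite omega_skew23 omega_skew12 omega_skew23 opprK.
Qed.

End Alternating.
End PerturbedPreCourant.

Theorem lemma4p2 (R : realFieldType) (A : comAlgType R) (S : lmodType A)
    (pair : S -> S -> A) (rho : S -> A -> A) (D : A -> S)
    (circ omega : S -> S -> S) :
  courant_vb pair rho D ->
  pre_courant pair rho circ ->
  wedge2_hom omega ->
  (pre_courant pair rho (fun e1 e2 => circ e1 e2 + omega e1 e2) <->
   C2D pair rho D omega).
Proof.
move=> [pairC [pair_linl [pair_nondeg [anchor_lin [_ [pairD _]]]]]]
  circ_pre [omega_bilin omega_alt].
apply: iff_trans
  (pre_courant_perturbE pairC pair_linl anchor_lin omega_bilin omega_alt circ_pre) _.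
exact: iff_sym (C2DE pairC pair_linl omega_bilin omega_alt pair_nondeg pairD).
Qed.
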